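(* Consider a system $\Sigma$ undergoing an irreversible isobaric vitrification (cooling) process along a path from an initial equilibrium supercooled-liquid state A at medium temperature $T_{0\text{A}}$ (above the glass-transition onset $T_{0\text{g}}$) to a state $\text{A}_0$ at absolute zero, with no latent heat along the path. Let $S(0)\equiv S_{\text{R}}$ be the entropy of the system at absolute zero (the residual entropy) and let $$S_{\text{expt}}(0)\doteq S(T_{0\text{A}})+\int_{T_{0\text{A}}}^{0} C_P\,\frac{dT_0}{T_0}$$ be the experimentally (calorimetrically) measured, extrapolated entropy at absolute zero. Then $$S_{\text{R}}\equiv S(0)>S_{\text{expt}}(0).$$
   Context: The system $\Sigma$ is in contact with a very large medium $\widetilde{\Sigma}$ that is always in equilibrium at temperature $T_0$ and pressure $P_0$; together they form an isolated system. Every entropy change of the system decomposes as $dS=d_{\text{e}}S+d_{\text{i}}S$, where $d_{\text{e}}S=-d_{\text{e}}Q/T_0\equiv C_P\,dT_0/T_0$ is the entropy exchanged with the medium ($d_{\text{e}}Q$ being the heat given out by the system to the medium at medium temperature $T_0$, and $C_P$ the measured isobaric heat capacity), and $d_{\text{i}}S$ is the entropy generated by irreversible processes inside the system. The second law states $d_{\text{i}}S\ge 0$, with strict inequality $d_{\text{i}}S>0$ for an irreversible process; vitrification (with observation time shorter than the equilibration time below $T_{0\text{g}}$) is an irreversible process. Entropy is treated as a state function of the system's state variables (internal-equilibrium assumption). *)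

From Stdlib Require Import Reals.
From Coquelicot Require Import Coquelicot.
Open Scope R_scope.

Definition S_expt (S CP : R -> R) (T0A : R) : R :=
  S T0A + RInt (fun T0 => CP T0 / T0) T0A 0.

From Stdlib Require Import Reals Lra.
From Coquelicot Require Import Coquelicot.
Open Scope R_scope.

(* Along the cooling path put S_i(T0) = S(T0) - \int_0^T0 C_P dT/T, the part of
   S not accounted for by the exchanged entropy.  The entropy balance makes
   sigma its derivative, so by the second law S_i is nonincreasing on (0, T0A)
   and strictly decreasing on (0, T0g).  Since S and the running integral are
   continuous at both ends of the path, S_i(0) > S_i(T0A); and S_i(0) = S(0),
   while S_i(T0A) is exactly the calorimetric extrapolation S_expt(0). *)

Lemma filterlim_Rminus {T : Type} {F : (T -> Prop) -> Prop} {FF : Filter F}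
  (u v : T -> R) (lu lv : R) :
  filterlim u F (locally lu) -> filterlim v F (locally lv) ->
  filterlim (fun x => u x - v x) F (locally (lu - lv)).
Proof.
  intros Hu Hv.
  apply (filterlim_comp_2 (G := locally lu) (H := locally (opp lv))
           u (fun x => opp (v x)) plus Hu).
  - eapply filterlim_comp;
      [exact Hv | apply (filterlim_opp (K := R_AbsRing) (V := R_NormedModule))].
  - exact (filterlim_plus (K := R_AbsRing) (V := R_NormedModule) lu (opp lv)).
Qed.

Section RunningIntegral.

Variables (f : R -> R) (a b : R).
Hypothesis f_int : ex_RInt f a b.

Lemma ex_RInt_lower x : a <= x <= b -> ex_RInt f a x.
Proof. intros Hx. exact (ex_RInt_Chasles_1 f a x b Hx f_int). Qed.

Lemma RInt_lower_uniformly_continuous eps : 0 < eps ->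
  exists delta, 0 < delta /\
    forall x y, a <= x -> x <= y -> y <= b -> y - x < delta ->
      Rabs (RInt f a y - RInt f a x) < eps.
Proof.
  intros Heps.
  destruct (ex_RInt_ub f a b f_int) as [M HM].
  set (K := Rabs M + 1).
  assert (HK : 0 < K) by (pose proof (Rabs_pos M); unfold K; lra).
  exists (eps / K). split; [apply Rdiv_lt_0_compat; lra |].
  intros x y Hx Hxy Hy Hd.
  assert (Hay : ex_RInt f a y) by (apply ex_RInt_lower; lra).
  assert (Hxy_int : ex_RInt f x y)
    by (apply (ex_RInt_Chasles_2 f a x y); [lra | exact Hay]).
  rewrite <- (RInt_Chasles f a x y (ex_RInt_lower x ltac:(lra)) Hxy_int).
  change (plus (RInt f a x) (RInt f x y)) with (RInt f a x + RInt f x y).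
  rewrite Rplus_minus_l.
  apply Rle_lt_trans with ((y - x) * K).
  - apply abs_RInt_le_const; [lra | exact Hxy_int |].
    intros t Ht.
    assert (Hft : norm (f t) <= M) by (apply HM; rewrite Rmin_left, Rmax_right; lra).
    change (norm (f t)) with (Rabs (f t)) in Hft.
    pose proof (Rle_abs M). unfold K. lra.
  - replace eps with (eps / K * K) by (field; lra).
    apply Rmult_lt_compat_r; lra.
Qed.

Lemma is_derive_RInt_interior x : a < x < b -> continuous f x ->
  is_derive (RInt f a) x (f x).
Proof.
  intros Hx Hfx. apply (is_derive_RInt f (RInt f a) a x); [| exact Hfx].
  assert (Hnear : locally x (fun y => a < y < b)).
  { apply (open_and (fun y => a < y) (fun y => y < b));
      [apply open_gt | apply open_lt | exact Hx]. }
  apply (filter_imp (fun y => a < y < b)); [intros y Hy | exact Hnear].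
  apply (RInt_correct (V := R_CompleteNormedModule)), ex_RInt_lower; lra.
Qed.

Hypothesis a_lt_b : a < b.

Lemma filterlim_RInt_at_right : filterlim (RInt f a) (at_right a) (locally 0).
Proof.
  apply filterlim_locally. intros eps.
  destruct (RInt_lower_uniformly_continuous eps (cond_pos eps)) as [d [Hd Hcont]].
  exists (mkposreal (Rmin d (b - a)) (Rmin_pos d (b - a) Hd ltac:(lra))).
  intros y Hy Hay. change (Rabs (y - a) < Rmin d (b - a)) in Hy.
  change (Rabs (RInt f a y - 0) < eps).
  apply Rabs_def2 in Hy. pose proof (Rmin_l d (b - a)). pose proof (Rmin_r d (b - a)).
  replace (RInt f a y - 0) with (RInt f a y - RInt f a a)
    by (rewrite RInt_point; reflexivity).
  apply Hcont; lra.
Qed.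

Lemma filterlim_RInt_at_left :
  filterlim (RInt f a) (at_left b) (locally (RInt f a b)).
Proof.
  apply filterlim_locally. intros eps.
  destruct (RInt_lower_uniformly_continuous eps (cond_pos eps)) as [d [Hd Hcont]].
  exists (mkposreal (Rmin d (b - a)) (Rmin_pos d (b - a) Hd ltac:(lra))).
  intros y Hy Hyb. change (Rabs (y - b) < Rmin d (b - a)) in Hy.
  change (Rabs (RInt f a y - RInt f a b) < eps).
  apply Rabs_def2 in Hy. pose proof (Rmin_l d (b - a)). pose proof (Rmin_r d (b - a)).
  rewrite Rabs_minus_sym.
  apply Hcont; lra.
Qed.

End RunningIntegral.

Section MeanValue.

Variables (g dg : R -> R) (a b : R).
Hypothesis g_derive : forall x, a < x < b -> is_derive g x (dg x).

Lemma derive_mean_value x y : a < x -> x <= y -> y < b ->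
  exists c, x <= c <= y /\ g y - g x = dg c * (y - x).
Proof.
  intros Hx Hxy Hy.
  destruct (MVT_gen g x y dg) as [c [Hc E]].
  - rewrite Rmin_left, Rmax_right by lra.
    intros t Ht. apply g_derive. lra.
  - rewrite Rmin_left, Rmax_right by lra.
    intros t Ht. apply continuity_pt_filterlim.
    apply (ex_derive_continuous (K := R_AbsRing) (V := R_NormedModule)).
    exists (dg t). apply g_derive. lra.
  - rewrite Rmin_left, Rmax_right in Hc by lra.
    exists c. split; assumption.
Qed.

Lemma derive_nonpos_antitone :
  (forall x, a < x < b -> dg x <= 0) ->
  forall x y, a < x -> x <= y -> y < b -> g y <= g x.
Proof.
  intros Hdg x y Hx Hxy Hy.
  destruct (derive_mean_value x y Hx Hxy Hy) as [c [Hc E]].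
  assert (dg c <= 0) by (apply Hdg; lra).
  nra.
Qed.

Lemma derive_neg_decreasing :
  (forall x, a < x < b -> dg x < 0) ->
  forall x y, a < x -> x < y -> y < b -> g y < g x.
Proof.
  intros Hdg x y Hx Hxy Hy.
  destruct (derive_mean_value x y Hx (Rlt_le _ _ Hxy) Hy) as [c [Hc E]].
  assert (dg c < 0) by (apply Hdg; lra).
  nra.
Qed.

End MeanValue.

Lemma endpoint_lt_of_derive (g dg : R -> R) (a c b : R) : a < c -> c <= b ->
  (forall x, a < x < b -> is_derive g x (dg x)) ->
  (forall x, a < x < b -> dg x <= 0) ->
  (forall x, a < x < c -> dg x < 0) ->
  filterlim g (at_right a) (locally (g a)) ->
  filterlim g (at_left b) (locally (g b)) ->
  g b < g a.
Proof.
  intros Hac Hcb Hd Hnonpos Hneg Ha Hb.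
  set (p := a + (c - a) / 3). set (q := a + 2 * (c - a) / 3).
  assert (Hdc : forall x, a < x < c -> is_derive g x (dg x)) by (intros; apply Hd; lra).
  assert (Hpq : g q < g p)
    by (apply (derive_neg_decreasing g dg a c Hdc Hneg); unfold p, q; lra).
  assert (Hap : g p <= g a).
  { apply (closed_filterlim_loc g (fun u => g p <= u) (g a) Ha); [| apply closed_ge].
    exists (mkposreal (p - a) ltac:(unfold p; lra)).
    intros y Hy Hay. change (Rabs (y - a) < p - a) in Hy. apply Rabs_def2 in Hy.
    apply (derive_nonpos_antitone g dg a b Hd Hnonpos); unfold p in *; lra. }
  assert (Hqb : g b <= g q).
  { apply (closed_filterlim_loc g (fun u => u <= g q) (g b) Hb); [| apply closed_le].
    exists (mkposreal (b - q) ltac:(unfold q; lra)).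
    intros y Hy Hyb. change (Rabs (y - b) < b - q) in Hy. apply Rabs_def2 in Hy.
    apply (derive_nonpos_antitone g dg a b Hd Hnonpos); unfold q in *; lra. }
  lra.
Qed.

Lemma is_derive_minus_RInt (S f ds : R -> R) (a b x : R) :
  ex_RInt f a b -> a < x < b -> continuous f x ->
  is_derive S x (f x + ds x) ->
  is_derive (fun t => S t - RInt f a t) x (ds x).
Proof.
  intros Hf Hx Hfx HS.
  replace (ds x) with (f x + ds x - f x) by ring.
  apply (is_derive_minus S (RInt f a)); [exact HS |].
  exact (is_derive_RInt_interior f a b Hf x Hx Hfx).
Qed.

(* sigma is d_iS/dT0 along the path, so dS = d_eS + d_iS reads
   S' = CP/T0 + sigma; since cooling means dT0 < 0, the second law reads
   sigma <= 0, and irreversibility below T0g reads sigma < 0. *)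
Theorem theorem1 (T0g T0A : R) (S CP sigma : R -> R) :
  0 < T0g -> T0g < T0A ->
  (forall T0, 0 < T0 < T0A -> continuous CP T0) ->
  ex_RInt (fun T0 => CP T0 / T0) 0 T0A ->
  (forall T0, 0 < T0 < T0A -> is_derive S T0 (CP T0 / T0 + sigma T0)) ->
  filterlim S (at_right 0) (locally (S 0)) ->
  filterlim S (at_left T0A) (locally (S T0A)) ->
  (forall T0, 0 < T0 < T0A -> sigma T0 <= 0) ->
  (forall T0, 0 < T0 < T0g -> sigma T0 < 0) ->
  S 0 > S_expt S CP T0A.
Proof.
  intros Hg HgA HCP Hint HS HS0 HSA Hsig Hsig'.
  set (f := fun T0 => CP T0 / T0).
  set (Si := fun T0 => S T0 - RInt f 0 T0).
  assert (Si_0 : Si 0 = S 0)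
    by (unfold Si; rewrite RInt_point; apply Rminus_0_r).
  assert (Si_T0A : Si T0A = S_expt S CP T0A).
  { unfold Si, S_expt; fold f. rewrite <- (opp_RInt_swap f 0 T0A Hint). reflexivity. }
  rewrite <- Si_T0A, <- Si_0.
  apply (endpoint_lt_of_derive Si sigma 0 T0g T0A); try lra.
  - intros x Hx. apply (is_derive_minus_RInt S f sigma 0 T0A x Hint Hx).
    + apply (continuous_mult CP (fun t => / t)); [apply HCP; exact Hx |].
      apply continuous_Rinv_comp; [apply continuous_id | lra].
    + apply HS; exact Hx.
  - exact Hsig.
  - exact Hsig'.
  - apply filterlim_Rminus; [exact HS0 |].
    rewrite RInt_point. apply (filterlim_RInt_at_right f 0 T0A Hint); lra.
  - apply filterlim_Rminus; [exact HSA |].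
    apply (filterlim_RInt_at_left f 0 T0A Hint); lra.
Qed.
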